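(* Let $p$ be a prime, $e\ge1$, $q=p^e$, $0\le\ell\le e-1$, and let $a\in\mathbb{F}_q$, $a\ne0$. Let $M$ be the $n\times n$ matrix whose columns $\varphi_1,\dots,\varphi_n\in\mathbb{F}_q^n$ form an $\ell$-Galois $(a,0,a)$-equiangular tight frame for $\mathbb{F}_q^n$, and let $G_0=[I_n\mid M]$. Let $\mathcal{C}\subseteq\mathbb{F}_q^{2n}$ be the linear code generated by the rows of $G_0$. If $a=-1$, then $\mathcal{C}$ is an $\ell$-Galois self-dual code, and if $a\neq-1$, then $\mathcal{C}$ is an $\ell$-Galois LCD code.
   Context: For vectors $\mathbf{x},\mathbf{y}$ of length $N$, $(\mathbf{x},\mathbf{y})_\ell=\sum_{i=1}^N x_i^{p^\ell}y_i$. For a matrix $\Phi$, $\Phi^{\dagger_\ell}$ is the transpose of the matrix obtained by raising each entry to the power $p^\ell$. Vectors $\varphi_1,\dots,\varphi_m\in\mathbb{F}_q^n$ with matrix $\Phi$ (columns $\varphi_i$) form an $\ell$-Galois $(a,b,c)$-equiangular tight frame if they span $\mathbb{F}_q^n$, $\Phi\Phi^{\dagger_\ell}=cI_n$, $(\varphi_i,\varphi_i)_\ell=a$ for all $i$, and $(\varphi_i,\varphi_j)_\ell(\varphi_j,\varphi_i)_\ell=b$ for all $i\neq j$. The $\ell$-Galois inner product is $\langle\mathbf{x},\mathbf{y}\rangle_\ell=\sum_i x_iy_i^{p^\ell}$; the $\ell$-Galois dual of a linear code $\mathcal{C}$ is $\mathcal{C}^{\perp_\ell}=\{\mathbf{x}:\langle\mathbf{x},\mathbf{c}\rangle_\ell=0\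 \forall\mathbf{c}\in\mathcal{C}\}$; $\mathcal{C}$ is $\ell$-Galois self-dual if $\mathcal{C}=\mathcal{C}^{\perp_\ell}$ and $\ell$-Galois LCD if $\mathcal{C}\cap\mathcal{C}^{\perp_\ell}=\{\mathbf{0}\}$. *)

From HB Require Import structures.
From mathcomp Require Import all_boot all_order all_algebra all_field.
Set Implicit Arguments. Unset Strict Implicit. Unset Printing Implicit Defensive.
Import GRing.Theory.
Local Open Scope ring_scope.

Section GaloisDefs.
Variables (F : fieldType) (p l : nat).

Definition frobl (x : F) : F := x ^+ (p ^ l).

Definition frame_ip (N : nat) (x y : 'cV[F]_N) : F :=
  \sum_(i < N) frobl (x i 0) * y i 0.

Definition gdagger (n m : nat) (Phi : 'M[F]_(n, m)) : 'M[F]_(m, n) :=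
  (map_mx frobl Phi)^T.

Definition galois_ETF (n m : nat) (a b c : F) (Phi : 'M[F]_(n, m)) : Prop :=
  [/\ \rank Phi = n,
      Phi *m gdagger Phi = c%:M,
      (forall i, frame_ip (col i Phi) (col i Phi) = a) &
      (forall i j, i != j ->
         frame_ip (col i Phi) (col j Phi) * frame_ip (col j Phi) (col i Phi) = b)].

Definition galois_ip (N : nat) (x y : 'rV[F]_N) : F :=
  \sum_(i < N) x 0 i * frobl (y 0 i).

Definition gen_code (k N : nat) (G : 'M[F]_(k, N)) : 'rV[F]_N -> Prop :=
  fun x => (x <= G)%MS.

Definition galois_dual (N : nat) (C : 'rV[F]_N -> Prop) : 'rV[F]_N -> Prop :=
  fun x => forall c, C c -> galois_ip x c = 0.

Definition galois_self_dual (N : nat) (C : 'rV[F]_N -> Prop) : Prop :=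
  forall x, C x <-> galois_dual C x.

Definition galois_LCD (N : nat) (C : 'rV[F]_N -> Prop) : Prop :=
  forall x, C x -> galois_dual C x -> x = 0.

End GaloisDefs.

(** Since [F] has characteristic [p], [x |-> x ^+ p ^ l] is a ring
    endomorphism, so [(A B)^{†_l} = B^{†_l} A^{†_l}] and a vector is
    orthogonal to the row space of [G] iff it is annihilated by [G^{†_l}].
    For [G = [I | M]] the Gram matrix is
    [G G^{†_l} = I + M M^{†_l} = (1 + a) I].
    If [a = -1] it vanishes, so the code is self-orthogonal; conversely a
    vector [[x1 | x2]] orthogonal to the code satisfies [x1 = - x2 M^{†_l}],
    and [M^{†_l} M = - I] gives [x2 = x1 M], so it lies in the code.  If
    [a <> -1] the Gram matrix is invertible, and a codeword [u G] orthogonal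
    to the code satisfies [(1 + a) u = 0], hence is zero. *)
From HB Require Import structures.
From mathcomp Require Import all_boot all_order all_algebra all_field.
Set Implicit Arguments.
Unset Strict Implicit.
Unset Printing Implicit Defensive.

Import GRing.Theory.
Local Open Scope ring_scope.

Section FrobeniusPower.
Variables (F : fieldType) (p l : nat).
Hypothesis pcharFp : p \in [pchar F].

Lemma frobl_is_zmod_morphism : zmod_morphism (@frobl F p l).
Proof.
have pchar_nat : [pchar F].-nat (p ^ l)%N.
  by rewrite pnatX pnatE ?pcharFp // (pcharf_prime pcharFp).
by move=> x y; rewrite /frobl exprDn_pchar // exprNn_pchar.
Qed.

Lemma frobl_is_monoid_morphism : monoid_morphism (@frobl F p l).
Proof. by split=> [|x y]; rewrite /frobl ?expr1n ?exprMn. Qed.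

HB.instance Definition _ :=
  GRing.isZmodMorphism.Build F F (@frobl F p l) frobl_is_zmod_morphism.
HB.instance Definition _ :=
  GRing.isMonoidMorphism.Build F F (@frobl F p l) frobl_is_monoid_morphism.

Lemma gdaggerM m n k (A : 'M[F]_(m, n)) (B : 'M[F]_(n, k)) :
  gdagger p l (A *m B) = gdagger p l B *m gdagger p l A.
Proof. by rewrite /gdagger map_mxM trmx_mul. Qed.

Lemma gdagger1 n : gdagger p l (1%:M : 'M[F]_n) = 1%:M.
Proof. by rewrite /gdagger map_mx1 trmx1. Qed.

Lemma gdagger_row_mx m n1 n2 (A : 'M[F]_(m, n1)) (B : 'M[F]_(m, n2)) :
  gdagger p l (row_mx A B) = col_mx (gdagger p l A) (gdagger p l B).
Proof. by rewrite /gdagger map_row_mx tr_row_mx. Qed.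

Lemma galois_ipE N (x y : 'rV[F]_N) :
  galois_ip p l x y = (x *m gdagger p l y) 0 0.
Proof. by rewrite /galois_ip !mxE; apply: eq_bigr => i _; rewrite !mxE. Qed.

Section GeneratedCode.
Variables (k N : nat) (G : 'M[F]_(k, N)).
Let C := gen_code G.

Lemma galois_dual_gen_codeP x : galois_dual p l C x <-> x *m gdagger p l G = 0.
Proof.
split=> [x_dual | xG0 _ /submxP [v ->]].
- apply/rowP => i; rewrite [RHS]mxE -(x_dual _ (row_sub i G)) galois_ipE !mxE.
  by apply: eq_bigr => j _; rewrite !mxE.
- by rewrite galois_ipE gdaggerM mulmxA xG0 mul0mx mxE.
Qed.

Lemma gen_code_self_orthogonal :
  G *m gdagger p l G = 0 -> forall x, C x -> galois_dual p l C x.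
Proof.
move=> gram0 _ /submxP [u ->]; apply/galois_dual_gen_codeP.
by rewrite -mulmxA gram0 mulmx0.
Qed.

Lemma gen_code_galois_LCD : G *m gdagger p l G \in unitmx -> galois_LCD p l C.
Proof.
move=> gram_unit _ /submxP [u ->] /galois_dual_gen_codeP uG0.
have u0 : u = 0 by rewrite -(mulmxK gram_unit u) mulmxA uG0 mul0mx.
by rewrite u0 mul0mx.
Qed.

End GeneratedCode.

Lemma gdagger_systematic_gram n (M : 'M[F]_n) :
  row_mx 1%:M M *m gdagger p l (row_mx 1%:M M) = 1%:M + M *m gdagger p l M.
Proof. by rewrite gdagger_row_mx mul_row_col gdagger1 mulmx1. Qed.

Lemma galois_dual_systematic_sub n (M : 'M[F]_n) :
  M *m gdagger p l M = (-1)%:M -> forall x,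
  galois_dual p l (gen_code (row_mx 1%:M M)) x -> gen_code (row_mx 1%:M M) x.
Proof.
move=> MMd x /galois_dual_gen_codeP.
rewrite -[x]hsubmxK gdagger_row_mx mul_row_col gdagger1 mulmx1 => /eqP.
rewrite addr_eq0 => /eqP x1E.
have MdM : gdagger p l M *m M = (-1)%:M.
  have : M *m - gdagger p l M = 1%:M by rewrite mulmxN MMd raddfN opprK.
  by move/mulmx1C; rewrite mulNmx raddfN => /eqP; rewrite eqr_oppLR => /eqP.
apply/submxP; exists (lsubmx x); rewrite mul_mx_row mulmx1 x1E mulNmx.
by rewrite -mulmxA MdM mul_mx_scalar scaleN1r opprK.
Qed.

End FrobeniusPower.

Theorem mainTheorem6 (F : finFieldType) (p e l n : nat) (a : F) (M : 'M[F]_n) :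
  prime p -> (1 <= e)%N -> #|F| = (p ^ e)%N -> (l <= e - 1)%N ->
  a != 0 ->
  galois_ETF p l a 0 a M ->
  let C := gen_code (row_mx (1%:M : 'M[F]_n) M) in
  (a = -1 -> galois_self_dual p l C) /\ (a != -1 -> galois_LCD p l C).
Proof.
move=> p_prime _ cardF _ _ [_ MMd _ _] C.
have pcharFp : p \in [pchar F] by apply: card_finPcharP cardF p_prime.
have gram : row_mx 1%:M M *m gdagger p l (row_mx 1%:M M) = (1 + a)%:M.
  by rewrite gdagger_systematic_gram // MMd raddfD.
split=> [a_eqN1 x | a_neqN1].
- have gram0 : row_mx 1%:M M *m gdagger p l (row_mx 1%:M M) = 0.
    by rewrite gram a_eqN1 addrN raddf0.
  have MMdN1 : M *m gdagger p l M = (-1)%:M by rewrite MMd a_eqN1.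
  split=> [Cx | x_dual].
  + exact: (gen_code_self_orthogonal pcharFp gram0 Cx).
  + exact: (galois_dual_systematic_sub pcharFp MMdN1 x_dual).
- apply: gen_code_galois_LCD => //.
  by rewrite gram unitmxE det_scalar unitfE expf_neq0 // addrC addr_eq0.
Qed.
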